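(* Let $k'/k$ be a finite field extension and let $G=\mathrm{R}_{k'/k}(\mathbb{G}_m)$, acting on $k'$ by multiplication (i.e. $G(A)=(k'\otimes_kA)^\times$ acting on $k'\otimes_k A$). Let $W$ be a proper nonzero $k$-subspace of $k'$ and let $S=\mathrm{Stab}_G(W)$, the subgroup scheme with $S(A)=\{g\in G(A)\mid g(W\otimes_kA)\subseteq W\otimes_kA\}$. Then there exists an intermediate field $k\subseteq E\subsetneq k'$ such that $S\subseteq\mathrm{R}_{E/k}(\mathbb{G}_m)$.
   Context: $\mathrm{R}_{k'/k}$ denotes Weil restriction; $\mathrm{R}_{E/k}(\mathbb{G}_m)$ is regarded as a subgroup of $\mathrm{R}_{k'/k}(\mathbb{G}_m)$ via $E\subseteq k'$. *)

From HB Require Import structures.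
From mathcomp Require Import all_boot all_algebra all_field.
Set Implicit Arguments. Unset Strict Implicit. Unset Printing Implicit Defensive.
Import GRing.Theory.
Local Open Scope ring_scope.

(* Functor-of-points model of k' ⊗_k A for a finite extension L/F (k'/k) and a
   commutative F-algebra A: we identify L ⊗_F A with the free A-module A^n,
   n = [L:F], via the canonical F-basis (vbasis fullv) of L. *)
Section Tensor.
Variables (F : fieldType) (L : fieldExtType F) (A : comAlgType F).
Local Notation n := (\dim (fullv : {vspace L})).
Local Notation bL := (vbasis (fullv : {vspace L})).

Definition tens (x : L) (a : A) : 'rV[A]_n :=
  \row_i ((coord bL i x)%:A * a).

(* multiplication of L ⊗_F A (structure constants of L in the basis bL) *)
Definition tmul (u v : 'rV[A]_n) : 'rV[A]_n :=
  \row_k \sum_(i < n) \sum_(j < n)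
     (u 0 i * v 0 j * (coord bL k (tnth bL i * tnth bL j))%:A).

Definition tone : 'rV[A]_n := tens 1 1.

Definition in_tens (V : {vspace L}) (u : 'rV[A]_n) : Prop :=
  exists c : 'I_(\dim V) -> A, u = \sum_(j < \dim V) tens (tnth (vbasis V) j) (c j).

Definition tunit (g : 'rV[A]_n) : Prop := exists h, tmul g h = tone.

Definition in_stab (W : {vspace L}) (g : 'rV[A]_n) : Prop :=
  tunit g /\ forall u, in_tens W u -> in_tens W (tmul g u).

(* g ∈ R_{E/F}(G_m)(A) = (E ⊗ A)^×, viewed inside (L ⊗ A)^× *)
Definition in_RGm (E : {vspace L}) (g : 'rV[A]_n) : Prop :=
  in_tens E g /\ exists h, in_tens E h /\ tmul g h = tone.
End Tensor.

From HB Require Import structures.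
From mathcomp Require Import all_boot all_algebra all_field.
Set Implicit Arguments. Unset Strict Implicit. Unset Printing Implicit Defensive.
Import GRing.Theory.
Local Open Scope ring_scope.

(* E := {x | x W <= W} is a subalgebra, hence a subfield, of L, and E <> L
   since otherwise y = (y / w) w would lie in W for every y and any nonzero w
   in W.  E is the common kernel of the F-linear maps x |-> x w mod W, for w
   in a basis of W.  An element g of Stab(W)(A) kills the base changes of these
   maps, and a linear map vanishing on a finite intersection of kernels factors
   through the corresponding maps, so g lies in E (x) A.  By Cayley-Hamilton
   for multiplication by g, the inverse of g is a polynomial in g, so it lies
   in E (x) A as well. *)

Lemma Cayley_Hamilton_inv (R : comNzRingType) m (M : 'M[R]_m) (c : R) :
  c * \det M = 1 ->
  exists (N : nat) (cs : nat -> R), \sum_(k < N) cs k *: M ^+ k.+1 = 1%:M.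
Proof.
case: m M => [|m] M cM.
  by exists 0%N, (fun _ => 0); rewrite big_ord0; apply/matrixP => [[]].
set p := char_poly M.
have CH := Cayley_Hamilton M.
have hornerE : horner_mx M p = \sum_(i < size p) p`_i *: M ^+ i.
  rewrite -{1}[p]coefK poly_def rmorph_sum; apply: eq_bigr => i _.
  by rewrite -[LHS]/(horner_mx M (p`_i *: 'X^i)) horner_mxZ rmorphXn /= horner_mx_X.
rewrite -/p hornerE size_char_poly big_ord_recl expr0 char_poly_det in CH.
set d := - ((-1) ^+ m.+1 * c).
exists m.+1, (fun k => d * p`_k.+1).
have sum_tail : \sum_(i < m.+1) p`_(lift ord0 i) *: M ^+ lift ord0 i =
                - ((-1) ^+ m.+1 * \det M)%:A.
  by apply/eqP; rewrite -addr_eq0 addrC CH.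
transitivity (d *: \sum_(i < m.+1) p`_(lift ord0 i) *: M ^+ lift ord0 i).
  by rewrite scaler_sumr; apply: eq_bigr => i _; rewrite scalerA lift0.
rewrite sum_tail /d scalerN scaleNr opprK scalerA mulrACA cM mulr1.
by rewrite -exprD -signr_odd oddD addbb expr0 scale1r.
Qed.

Lemma lker_cap_factor (K : fieldType) (aT vT rT : vectType K)
    (f : 'Hom(aT, vT)) (Q : 'Hom(aT, rT)) (U : {vspace aT}) :
  (lker f :&: U <= lker Q)%VS ->
  exists psi : 'Hom(vT, rT), (U <= lker (Q - (psi \o f)%VF))%VS.
Proof.
move=> kerQ; set P := projv U; set fU := (f \o P)%VF.
(* psi inverts f on f(U) through U, then applies Q. *)
exists (Q \o P \o fU^-1)%VF; apply/subvP => x xU.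
rewrite memv_ker add_lfunE opp_lfunE !comp_lfunE subr_eq0.
set y := (fU^-1)%VF (f x).
have fPy : f (P y) = f x.
  have fx : f x = fU x by rewrite comp_lfunE /P projv_id.
  by have := limg_lfunVK (memv_img fU (memvf x)); rewrite -fx comp_lfunE.
have : P y - x \in (lker f :&: U)%VS.
  by rewrite memv_cap memv_ker linearB /= fPy subrr eqxx rpredB ?memv_proj.
by move/(subvP kerQ); rewrite memv_ker linearB /= subr_eq0 eq_sym.
Qed.

Lemma lker_subprojv (K : fieldType) (vT : vectType K) (V : {vspace vT}) :
  lker (\1 - projv V)%VF = V.
Proof.
apply/vspaceP => y; rewrite memv_ker add_lfunE opp_lfunE id_lfunE subr_eq0.
by apply/eqP/idP => [->|/projv_id //]; apply: memv_proj.
Qed.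

Section BaseChange.
Variables (F : fieldType) (L : fieldExtType F) (A : comAlgType F).
Local Notation n := (\dim (fullv : {vspace L})).
Local Notation bL := (vbasis (fullv : {vspace L})).
Local Notation b i := (tnth bL i).
Local Notation tone := (@tone F L A).
Implicit Types (x y : L) (a c : A) (f : 'End(L)) (u v w g h : 'rV[A]_n).

Lemma tensE x a k : tens x a 0 k = coord bL k x *: a.
Proof. by rewrite mxE mulr_algl. Qed.

Lemma tensDl x y a : tens (x + y) a = tens x a + tens y a.
Proof. by apply/rowP => k; rewrite !mxE !mulr_algl linearD scalerDl. Qed.

Lemma tens0l a : tens (0 : L) a = 0.
Proof. by apply/rowP => k; rewrite !mxE !mulr_algl linear0 scale0r. Qed.

Lemma tensZl (r : F) x a : tens (r *: x) a = tens x (r *: a).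
Proof. by apply/rowP => k; rewrite !mxE !mulr_algl linearZ /= scalerA mulrC -scalerA. Qed.

Lemma tensDr x a c : tens x (a + c) = tens x a + tens x c.
Proof. by apply/rowP => k; rewrite !mxE !mulr_algl scalerDr. Qed.

Lemma tens0r x : tens x (0 : A) = 0.
Proof. by apply/rowP => k; rewrite !mxE !mulr_algl scaler0. Qed.

Lemma tensMr x a c : tens x (c * a) = c *: tens x a.
Proof. by apply/rowP => k; rewrite !mxE !mulr_algl scalerAr. Qed.

Lemma tens_suml I (r : seq I) (P : pred I) (f : I -> L) a :
  tens (\sum_(i <- r | P i) f i) a = \sum_(i <- r | P i) tens (f i) a.
Proof. by elim/big_rec2: _ => [|i y s _ <-]; rewrite ?tens0l ?tensDl. Qed.

Lemma tens_vbasis (V : {vspace L}) x a : x \in V ->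
  tens x a = \sum_(j < \dim V) tens (tnth (vbasis V) j) (coord (vbasis V) j x *: a).
Proof.
move=> xV; rewrite {1}(coord_vbasis xV) tens_suml.
by apply: eq_bigr => j _; rewrite tensZl (tnth_nth 0).
Qed.

(* The matrix of the base change f (x) A, acting on coordinate rows. *)
Definition lift_mx (f : 'End(L)) : 'M[A]_n := \matrix_(i, k) (coord bL k (f (b i)))%:A.

Lemma row_lift_mx f i : row i (lift_mx f) = tens (f (b i)) 1.
Proof. by apply/rowP => k; rewrite !mxE mulr1. Qed.

Lemma lift_mxE f u : u *m lift_mx f = \sum_i tens (f (b i)) (u 0 i).
Proof.
rewrite mulmx_sum_row; apply: eq_bigr => i _.
by rewrite row_lift_mx -tensMr mulr1.
Qed.

Lemma lift_tens f x a : tens x a *m lift_mx f = tens (f x) a.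
Proof.
rewrite lift_mxE {2}(coord_vbasis (memvf x)) linear_sum tens_suml.
by apply: eq_bigr => i _; rewrite tensE linearZ tensZl (tnth_nth 0).
Qed.

Lemma lift_mx1 : lift_mx \1 = 1%:M.
Proof.
apply/matrixP => i k; rewrite !mxE id_lfunE (tnth_nth 0).
rewrite coord_free ?(basis_free (vbasisP _)) //.
by case: (i == k); rewrite ?scale1r ?scale0r.
Qed.

Lemma lift_mx0 : lift_mx 0 = 0.
Proof. by apply/matrixP => i k; rewrite !mxE zero_lfunE linear0 scale0r. Qed.

Lemma lift_mxB (f g : 'End(L)) : lift_mx (f - g) = lift_mx f - lift_mx g.
Proof.
by apply/matrixP => i k; rewrite !mxE add_lfunE opp_lfunE linearB scalerBl.
Qed.

Lemma lift_mx_comp (f g : 'End(L)) : lift_mx (f \o g) = lift_mx g *m lift_mx f.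
Proof.
apply/row_matrixP => i.
by rewrite row_mul !row_lift_mx lift_tens comp_lfunE.
Qed.

Lemma tens_decomp u : u = \sum_i tens (b i) (u 0 i).
Proof.
rewrite -[LHS]mulmx1 -lift_mx1 lift_mxE.
by apply: eq_bigr => i _; rewrite id_lfunE.
Qed.

Lemma mulmx_lift_mx_eq0 I (r : seq I) (fs : I -> 'End(L)) (Q : 'End(L)) u :
    (forall i, u *m lift_mx (fs i) = 0) ->
  (\bigcap_(i <- r) lker (fs i) <= lker Q)%VS -> u *m lift_mx Q = 0.
Proof.
move=> ufs; elim: r Q => [|i r IH] Q.
  rewrite big_nil => kerQ; suff -> : Q = 0 by rewrite lift_mx0 mulmx0.
  apply/lfunP => x; rewrite zero_lfunE; apply/eqP.
  by rewrite -memv_ker (subvP kerQ) ?memvf.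
rewrite big_cons => /lker_cap_factor [psi /IH].
by rewrite lift_mxB lift_mx_comp mulmxBr mulmxA ufs mul0mx subr0.
Qed.

Lemma in_tens0 (V : {vspace L}) : in_tens V (0 : 'rV[A]_n).
Proof. by exists (fun _ => 0); rewrite big1 // => j _; rewrite tens0r. Qed.

Lemma in_tensD (V : {vspace L}) u v : in_tens V u -> in_tens V v -> in_tens V (u + v).
Proof.
move=> [c ->] [d ->]; exists (fun j => c j + d j).
by rewrite -big_split; apply: eq_bigr => j _; rewrite tensDr.
Qed.

Lemma in_tensZ (V : {vspace L}) c u : in_tens V u -> in_tens V (c *: u).
Proof.
move=> [d ->]; exists (fun j => c * d j).
by rewrite scaler_sumr; apply: eq_bigr => j _; rewrite tensMr.
Qed.

Lemma in_tens_sum (V : {vspace L}) I (r : seq I) (P : pred I) (f : I -> 'rV[A]_n) :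
  (forall i, P i -> in_tens V (f i)) -> in_tens V (\sum_(i <- r | P i) f i).
Proof.
move=> Vf; elim/big_rec: _ => [|i s Pi Vs]; first exact: in_tens0.
by apply: in_tensD => //; apply: Vf.
Qed.

Lemma tens_in (V : {vspace L}) x a : x \in V -> in_tens V (tens x a).
Proof. by move=> xV; rewrite (tens_vbasis a xV); eexists. Qed.

Lemma in_tensP (V : {vspace L}) u : in_tens V u <-> u *m lift_mx (\1 - projv V)%VF = 0.
Proof.
split=> [[c ->]|uV].
  rewrite mulmx_suml big1 // => j _; rewrite lift_tens add_lfunE opp_lfunE id_lfunE.
  by rewrite projv_id ?subrr ?tens0l // vbasis_mem ?mem_tnth.
move/eqP: uV; rewrite lift_mxB lift_mx1 mulmxBr mulmx1 subr_eq0 => /eqP ->.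
by rewrite lift_mxE; apply: in_tens_sum => i _; apply/tens_in/memv_proj.
Qed.

Lemma tmul_decomp u v :
  tmul u v = \sum_(i < n) \sum_(j < n) tens (b i * b j) (u 0 i * v 0 j).
Proof.
apply/rowP => k; rewrite !mxE summxE; apply: eq_bigr => i _.
by rewrite summxE; apply: eq_bigr => j _; rewrite tensE mulr_algr.
Qed.

Lemma tmulC u v : tmul u v = tmul v u.
Proof.
rewrite !tmul_decomp exchange_big; apply: eq_bigr => i _; apply: eq_bigr => j _.
by rewrite mulrC [_ * u 0 j]mulrC.
Qed.

Definition mul_mx (g : 'rV[A]_n) : 'M[A]_n :=
  \matrix_(j, k) \sum_(i < n) g 0 i * (coord bL k (b i * b j))%:A.

Lemma tmulE g u : tmul g u = u *m mul_mx g.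
Proof.
apply/rowP => k; rewrite !mxE exchange_big; apply: eq_bigr => j _.
rewrite mxE mulr_sumr; apply: eq_bigr => i _.
by rewrite [g 0 i * _]mulrC mulrA.
Qed.

Lemma tmulZr c u v : tmul u (c *: v) = c *: tmul u v.
Proof. by rewrite !tmulE scalemxAl. Qed.

Lemma tmul_sumr I (r : seq I) (P : pred I) (f : I -> 'rV[A]_n) u :
  tmul u (\sum_(i <- r | P i) f i) = \sum_(i <- r | P i) tmul u (f i).
Proof. by rewrite tmulE mulmx_suml; apply: eq_bigr => i _; rewrite tmulE. Qed.

Lemma tmul_suml I (r : seq I) (P : pred I) (f : I -> 'rV[A]_n) u :
  tmul (\sum_(i <- r | P i) f i) u = \sum_(i <- r | P i) tmul (f i) u.
Proof. by rewrite tmulC tmul_sumr; apply: eq_bigr => i _; rewrite tmulC. Qed.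

Lemma tmul_tens x y a c : tmul (tens x a) (tens y c) = tens (x * y) (a * c).
Proof.
rewrite tmul_decomp [in RHS](coord_vbasis (memvf x)) [in RHS](coord_vbasis (memvf y)).
rewrite mulr_suml tens_suml; apply: eq_bigr => i _.
rewrite mulr_sumr tens_suml; apply: eq_bigr => j _.
rewrite -scalerAl -scalerAr !tensZl -!(tnth_nth 0) !tensE; congr tens.
by rewrite -scalerAl -scalerAr !scalerA mulrC.
Qed.

Lemma tmulA u v w : tmul u (tmul v w) = tmul (tmul u v) w.
Proof.
rewrite (tens_decomp u) !tmul_suml; apply: eq_bigr => i _.
rewrite (tens_decomp v) !(tmul_suml, tmul_sumr); apply: eq_bigr => j _.
rewrite (tens_decomp w) !(tmul_suml, tmul_sumr); apply: eq_bigr => k _.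
by rewrite !tmul_tens !mulrA.
Qed.

Lemma tmul1 u : tmul tone u = u.
Proof.
rewrite {1}(tens_decomp u) tmul_sumr {2}(tens_decomp u); apply: eq_bigr => i _.
by rewrite tmul_tens !mul1r.
Qed.

Lemma tmul_tens1 g x : tmul g (tens x 1) = g *m lift_mx (amulr x).
Proof.
rewrite {1}(tens_decomp g) tmul_suml lift_mxE; apply: eq_bigr => i _.
by rewrite tmul_tens mulr1 lfunE.
Qed.

Lemma in_tens_tmul (E : {aspace L}) u v :
  in_tens E u -> in_tens E v -> in_tens E (tmul u v).
Proof.
move=> [c ->] [d ->]; rewrite tmul_suml; apply: in_tens_sum => i _.
rewrite tmul_sumr; apply: in_tens_sum => j _.
by rewrite tmul_tens; apply: tens_in; rewrite memvM // vbasis_mem // mem_tnth.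
Qed.

Lemma mul_mx_inv g h : tmul g h = tone -> mul_mx h *m mul_mx g = 1%:M.
Proof.
move=> gh; apply/row_matrixP => i.
by rewrite !rowE mulmxA -!tmulE tmulA gh tmul1 mulmx1.
Qed.

Definition tpow g k := iter k (tmul g) tone.

Lemma tpowE g k : tone *m mul_mx g ^+ k = tpow g k.
Proof.
elim: k => [|k IH]; first by rewrite expr0 mulmx1.
by rewrite exprSr -mulmxE mulmxA IH -tmulE.
Qed.

Lemma tunit_inv_poly g : tunit g ->
  exists N (cs : nat -> A), tmul g (\sum_(k < N) cs k *: tpow g k) = tone.
Proof.
move=> [h /mul_mx_inv hg].
have [N [cs csE]] : exists N (cs : nat -> A),
    \sum_(k < N) cs k *: mul_mx g ^+ k.+1 = 1%:M.
  by apply: (Cayley_Hamilton_inv (c := \det (mul_mx h))); rewrite -det_mulmx hg det1.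
exists N, cs; rewrite tmul_sumr -[RHS]mulmx1 -csE mulmx_sumr.
by apply: eq_bigr => k _; rewrite tmulZr -scalemxAr tpowE.
Qed.

Lemma in_tens_tpow (E : {aspace L}) g k : in_tens E g -> in_tens E (tpow g k).
Proof.
move=> Eg; elim: k => [|k IH]; first exact/tens_in/mem1v.
exact: in_tens_tmul.
Qed.

Lemma in_RGm_tunit (E : {aspace L}) g : in_tens E g -> tunit g -> in_RGm E g.
Proof.
move=> Eg /tunit_inv_poly [N [cs gcs]]; split=> //.
exists (\sum_(k < N) cs k *: tpow g k); split=> //.
by apply: in_tens_sum => k _; apply/in_tensZ/in_tens_tpow.
Qed.

End BaseChange.

Section MulStabilizer.
Variables (F : fieldType) (L : fieldExtType F) (W : {vspace L}).

Definition mul_modW (i : 'I_(\dim W)) : 'End(L) :=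
  ((\1 - projv W) \o amulr (tnth (vbasis W) i))%VF.

Definition stabv : {vspace L} := (\bigcap_i lker (mul_modW i))%VS.

Lemma stabvP x : reflect (forall w, w \in W -> x * w \in W) (x \in stabv).
Proof.
have memW y : ((\1 - projv W)%VF y == 0) = (y \in W).
  by rewrite -memv_ker lker_subprojv.
rewrite memvE; apply: (iffP subv_bigcapP) => [xW w wW | xW i _].
  have := fun i => xW i isT; rewrite (coord_vbasis wW) mulr_sumr.
  move=> xb; apply: rpred_sum => i _; rewrite -scalerAr memvZ //.
  by have := xb i; rewrite -memvE memv_ker comp_lfunE memW lfunE (tnth_nth 0).
by rewrite -memvE memv_ker comp_lfunE memW lfunE xW ?vbasis_mem ?mem_tnth.
Qed.

Lemma stabv_is_aspace : is_aspace stabv.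
Proof.
rewrite /is_aspace has_algid1; last by apply/stabvP => w wW; rewrite mul1r.
apply/prodvP => x y /stabvP xW /stabvP yW; apply/stabvP => w wW.
by rewrite -mulrA xW // yW.
Qed.

Definition stab_field : {subfield L} := ASpace stabv_is_aspace.

Lemma stabv_proper : W != 0%VS -> W != fullv -> stabv != fullv.
Proof.
move=> W0 Wf; apply: contra Wf => /eqP stabL.
have w0 : vpick W != 0 by rewrite vpick0.
rewrite eqEsubv subvf /=; apply/subvP => y _.
have : y / vpick W \in stabv by rewrite stabL memvf.
by move/stabvP => /(_ _ (memv_pick W)); rewrite mulfVK.
Qed.

Lemma in_stab_tens_stabv (A : comAlgType F) (g : 'rV[A]_(\dim (fullv : {vspace L}))) :
  in_stab W g -> in_tens stabv g.
Proof.
move=> [_ gW]; apply/in_tensP.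
apply: (mulmx_lift_mx_eq0 (r := index_enum _) (fs := mul_modW)); last first.
  by rewrite lker_subprojv.
move=> i; rewrite lift_mx_comp mulmxA -tmul_tens1; apply/in_tensP/gW/tens_in.
by rewrite vbasis_mem ?mem_tnth.
Qed.

End MulStabilizer.

Unset Implicit Arguments.
Set Strict Implicit.

Theorem lemma5p10 (F : fieldType) (L : fieldExtType F) (W : {vspace L}) :
  W != 0%VS -> W != fullv ->
  exists E : {subfield L},
    (asval E != fullv) /\
    forall (A : comAlgType F) (g : 'rV[A]_(\dim (fullv : {vspace L}))),
      in_stab W g -> in_RGm (asval E) g.
Proof.
move=> W0 Wf; exists (stab_field W); split; first exact: stabv_proper.
move=> A g gW; apply: in_RGm_tunit; last by case: gW.
exact: in_stab_tens_stabv.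
Qed.
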